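(* Consider a batch contextual bandit with finite context space $\mathcal{S}$, finite action space $\mathcal{A}$, context distribution $d_0$, reward distributions $R(s,a)\in\Delta([0,R_{\max}])$, behavior policy $\pi_b$, $\mu:=d_0\times\pi_b$, and a finite class $\mathcal{F}$ of functions $\mathcal{S}\times\mathcal{A}\to[0,R_{\max}]$. Let $\hat f\in\mathcal{F}$ satisfy $\mathcal{L}_\mu(\hat f)-\min_{f\in\mathcal{F}}\mathcal{L}_\mu(f)\le\epsilon$. Assume: (a) there is $C<+\infty$ such that for all $f,f'\in\mathcal{F}$ and every admissible $\nu$, $\|f-f'\|_\nu^2\le C\,\|f-f'\|_\mu^2$; (b) there exists a valid reward function $f^\star\in\mathcal{F}$, i.e. $f^\star$ satisfies $\mathbb{E}_{(s,a)\sim\nu}[f^\star(s,a)]=\mathbb{E}_{(s,a)\sim\nu,\,r\sim R(s,a)}[r]$ for every admissible $\nu$, and $\mathcal{L}_\mu(f')-\mathcal{L}_\mu(f^\star)=\|f'-f^\star\|_\mu^2$ for every $f'\in\mathcal{F}$. Then for any valid reward function $f^\star$ (in the sense of (b)), $$v^{\pi_{\hat f}}\ \ge\ v^{\pi_{f^\star}}-2\sqrt{C\epsilon}.$$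
   Context: Data: $s\sim d_0$, $a\sim\pi_b(\cdot\mid s)$, $r\sim R(s,a)$; $\mu$ is the joint law of $(s,a)$. $\mathcal{L}_\mu(f):=\mathbb{E}_{(s,a)\sim\mu,\,r\sim R(s,a)}[(f(s,a)-r)^2]$. $\|g\|_\nu^2:=\mathbb{E}_{(s,a)\sim\nu}[g(s,a)^2]$. $\pi_f$ is the greedy policy $s\mapsto\arg\max_af(s,a)$ (fixed tie-breaking). The admissible distributions are the distributions $d_0\times\pi_f$ (i.e. $s\sim d_0$, $a=\pi_f(s)$) for $f\in\mathcal{F}$. $v^\pi:=\mathbb{E}_{s\sim d_0,\,r\sim R(s,\pi(s))}[r]$. *)

From HB Require Import structures.
From mathcomp Require Import all_boot all_order all_algebra.
From mathcomp Require Import all_classical all_reals all_analysis.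
Set Implicit Arguments. Unset Strict Implicit. Unset Printing Implicit Defensive.
Import Order.TTheory GRing.Theory Num.Theory.
Local Open Scope classical_set_scope.
Local Open Scope ring_scope.

Section Bandit.
Variables (R : realType) (S A : finType).
Definition is_distr (p : S -> R) := (forall s, 0 <= p s) /\ \sum_s p s = 1.
Definition is_policy (pib : S -> A -> R) :=
  forall s, (forall a, 0 <= pib s a) /\ \sum_a pib s a = 1.

Variable (Rw : S -> A -> probability R R).

Definition mean_reward (s : S) (a : A) : R := Rintegral (Rw s a) setT (fun r => r).

Definition loss (d0 : S -> R) (pib : S -> A -> R) (f : S -> A -> R) : R :=
  \sum_s \sum_a d0 s * pib s a * Rintegral (Rw s a) setT (fun r => (f s a - r) ^+ 2).

Definition sqnorm_mu (d0 : S -> R) (pib : S -> A -> R) (g : S -> A -> R) : R :=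
  \sum_s \sum_a d0 s * pib s a * (g s a) ^+ 2.

Definition sqnorm_det (d0 : S -> R) (pi : S -> A) (g : S -> A -> R) : R :=
  \sum_s d0 s * (g s (pi s)) ^+ 2.

Definition expect_det (d0 : S -> R) (pi : S -> A) (g : S -> A -> R) : R :=
  \sum_s d0 s * g s (pi s).

Definition value (d0 : S -> R) (pi : S -> A) : R := expect_det d0 pi mean_reward.

(* sel f is a greedy policy for f: sel f s in argmax_a f(s,a) (the selector
   fixes a deterministic tie-breaking rule) *)
Definition greedy_selector (sel : (S -> A -> R) -> S -> A) :=
  forall (f : S -> A -> R) (s : S) (a : A), f s a <= f s (sel f s).

Definition valid_reward (d0 : S -> R) (pib : S -> A -> R)
    (sel : (S -> A -> R) -> S -> A) (F : set (S -> A -> R)) (fs : S -> A -> R) :=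
  (forall g, F g -> expect_det d0 (sel g) fs = expect_det d0 (sel g) mean_reward) /\
  (forall f', F f' -> loss d0 pib f' - loss d0 pib fs = sqnorm_mu d0 pib (f' \- fs)).
End Bandit.

(* The regret of the greedy policy of fhat splits into the error of fhat
   against fstar under the greedy distribution of fstar and under that of fhat
   (the greedy step of fhat contributes a nonpositive term).  By Jensen each
   error is at most the L2 distance under an admissible distribution, which
   concentrability bounds by sqrt (C * ||fhat - fstar||_mu^2), and validity of
   fstar turns the excess loss of fhat into exactly that squared distance. *)
From HB Require Import structures.
From mathcomp Require Import all_boot all_order all_algebra.
From mathcomp Require Import all_classical all_reals all_analysis.
From mathcomp Require Import ring lra.
Import Order.TTheory GRing.Theory Num.Theory.
Local Open Scope classical_set_scope.
Local Open Scope ring_scope.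

Lemma expect_le_sqrt_moment2 (R : realType) (S : finType) (d h : S -> R) :
  is_distr d -> \sum_s d s * h s <= Num.sqrt (\sum_s d s * h s ^+ 2).
Proof.
move=> [d_ge0 d_sum1]; set E := \sum_s d s * h s.
have var_ge0 : 0 <= \sum_s d s * (h s - E) ^+ 2.
  by apply: sumr_ge0 => s _; rewrite mulr_ge0 ?sqr_ge0.
have varE : \sum_s d s * (h s - E) ^+ 2 =
    \sum_s d s * h s ^+ 2 - 2 * E * E + E ^+ 2 * \sum_s d s.
  rewrite (eq_bigr (fun s => d s * h s ^+ 2 - 2 * E * (d s * h s) + E ^+ 2 * d s));
    last by move=> s _; ring.
  by rewrite big_split /= sumrB -!mulr_sumr.
have E2_le : E ^+ 2 <= \sum_s d s * h s ^+ 2.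
  by move: var_ge0; rewrite varE d_sum1; lra.
by rewrite (le_trans (ler_norm E)) // -sqrtr_sqr ler_wsqrtr.
Qed.

Section DeterministicPolicies.
Context {R : realType} {S A : finType} (d0 : S -> R).

Lemma expect_detB (pi : S -> A) (f g : S -> A -> R) :
  expect_det d0 pi (f \- g) = expect_det d0 pi f - expect_det d0 pi g.
Proof. by rewrite /expect_det -sumrB; apply: eq_bigr => s _; rewrite -mulrBr. Qed.

Lemma expect_det_le_greedy (pi pig : S -> A) (g : S -> A -> R) :
  (forall s, 0 <= d0 s) -> (forall s, g s (pi s) <= g s (pig s)) ->
  expect_det d0 pi g <= expect_det d0 pig g.
Proof. by move=> d_ge0 pig_greedy; apply: ler_sum => s _; rewrite ler_wpM2l. Qed.

Lemma expect_det_regret_le (pi pig : S -> A) (h g : S -> A -> R) :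
  (forall s, 0 <= d0 s) -> (forall s, g s (pi s) <= g s (pig s)) ->
  expect_det d0 pi h - expect_det d0 pig h <=
  expect_det d0 pi (h \- g) + expect_det d0 pig (g \- h).
Proof.
move=> d_ge0 pig_greedy; rewrite !expect_detB -subr_ge0.
have -> : forall x y u v : R, (x - u) + (v - y) - (x - y) = v - u.
  by move=> *; ring.
by rewrite subr_ge0 expect_det_le_greedy.
Qed.

Lemma sqnorm_det_ge0 (pi : S -> A) (g : S -> A -> R) :
  (forall s, 0 <= d0 s) -> 0 <= sqnorm_det d0 pi g.
Proof. by move=> d_ge0; apply: sumr_ge0 => s _; rewrite mulr_ge0 ?sqr_ge0. Qed.

Lemma expect_det_le_sqrt_sqnorm (pi : S -> A) (g : S -> A -> R) :
  is_distr d0 -> expect_det d0 pi g <= Num.sqrt (sqnorm_det d0 pi g).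
Proof. exact: expect_le_sqrt_moment2. Qed.

Lemma sqnorm_mu_subC (pib : S -> A -> R) (f g : S -> A -> R) :
  sqnorm_mu d0 pib (f \- g) = sqnorm_mu d0 pib (g \- f).
Proof.
by apply: eq_bigr => s _; apply: eq_bigr => a _ /=; rewrite -sqrrN opprB.
Qed.

Lemma sqnorm_mu_ge0 (pib : S -> A -> R) (g : S -> A -> R) :
  is_distr d0 -> is_policy pib -> 0 <= sqnorm_mu d0 pib g.
Proof.
move=> [d_ge0 _] pibP; apply: sumr_ge0 => s _; apply: sumr_ge0 => a _.
by rewrite mulr_ge0 ?sqr_ge0 // mulr_ge0 // (pibP s).1.
Qed.

(* No sign is assumed on C: for C < 0 the hypothesis forces the admissible
   norm to vanish. *)
Lemma expect_det_le_concentrability (pi : S -> A) (pib : S -> A -> R)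
    (g : S -> A -> R) (C eps : R) :
  is_distr d0 -> sqnorm_mu d0 pib g <= eps -> 0 <= sqnorm_mu d0 pib g ->
  sqnorm_det d0 pi g <= C * sqnorm_mu d0 pib g ->
  expect_det d0 pi g <= Num.sqrt (C * eps).
Proof.
move=> d0D mu_le mu_ge0 conc; have det_ge0 := sqnorm_det_ge0 pi g d0D.1.
apply: (le_trans (expect_det_le_sqrt_sqnorm pi g d0D)).
have [C_ge0 | C_lt0] := leP 0 C.
  by rewrite ler_wsqrtr // (le_trans conc) // ler_wpM2l.
have -> : sqnorm_det d0 pi g = 0 by apply/eqP; rewrite eq_le det_ge0 andbT; nra.
by rewrite sqrtr0 sqrtr_ge0.
Qed.

End DeterministicPolicies.

Theorem theorem3 (R : realType) (S A : finType) (Rmax : R)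
  (d0 : S -> R) (pib : S -> A -> R) (Rw : S -> A -> probability R R)
  (F : set (S -> A -> R)) (sel : (S -> A -> R) -> S -> A)
  (fhat : S -> A -> R) (eps : R) :
  0 <= Rmax ->
  is_distr d0 -> is_policy pib ->
  (forall s a, Rw s a `[0, Rmax]%classic = 1%E) ->
  finite_set F ->
  (forall f, F f -> forall s a, 0 <= f s a <= Rmax) ->
  greedy_selector sel ->
  F fhat ->
  (forall f, F f -> loss Rw d0 pib fhat - loss Rw d0 pib f <= eps) ->
  forall C : R, (forall f f' g, F f -> F f' -> F g ->
      sqnorm_det d0 (sel g) (f \- f') <= C * sqnorm_mu d0 pib (f \- f')) ->
  forall fstar, F fstar -> valid_reward Rw d0 pib sel F fstar ->
  value Rw d0 (sel fhat) >= value Rw d0 (sel fstar) - 2 * Num.sqrt (C * eps).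
Proof.
move=> _ d0D pibP _ _ _ greedy Fhat excess C conc fs Ffs [fs_unbiased fs_loss].
have err : sqnorm_mu d0 pib (fhat \- fs) <= eps by rewrite -fs_loss ?excess.
have err' : sqnorm_mu d0 pib (fs \- fhat) <= eps by rewrite sqnorm_mu_subC.
have on_fs := expect_det_le_concentrability d0 (sel fs) pib _ C eps d0D err'
  (sqnorm_mu_ge0 d0 pib _ d0D pibP) (conc _ _ _ Ffs Fhat Ffs).
have on_fhat := expect_det_le_concentrability d0 (sel fhat) pib _ C eps d0D err
  (sqnorm_mu_ge0 d0 pib _ d0D pibP) (conc _ _ _ Fhat Ffs Fhat).
rewrite /value -!fs_unbiased // lerBlDl -lerBlDr mulr_natl mulr2n.
apply: le_trans
  (expect_det_regret_le d0 _ _ _ _ d0D.1 (fun s => greedy fhat s _)) _.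
exact: lerD.
Qed.
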